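(* Let $\mathcal{M}=(N,\mathcal{I})$ be a matroid or a $p$-matchoid, let $f:2^N\to\mathbb{R}$ be a normalized submodular function, let $\varepsilon\in(0,1/3)$, and let $\lambda\ge0$ satisfy $(1-\varepsilon)\lambda\le f(\{e\})\le\lambda$ for all $e\in N$. For $\delta\in[0,1]$ let $S_\delta$ denote a random subset of $N$ containing each element independently with probability $\delta$, and consider the two conditions (C1) $\mathbb{E}\bigl|\{e\in N: f_{S_\delta}(e)\le(1-\varepsilon)\lambda\}\bigr|\le\varepsilon|N|$, and (C2) $\mathbb{E}|\mathrm{span}(S_\delta)|\le\varepsilon|N|$. Suppose some $\delta\in[0,1]$ satisfies both, and let $\delta$ be the largest such value. Let $S=S_\delta$ and $I=\{e\in S: f_{S\setminus\{e\}}(e)\ge(1-\varepsilon)\lambda\text{ and } e\notin\mathrm{span}(S\setminus\{e\})\}$. Then: (i) $I\subseteq S$, $I\in\mathcal{I}$ always, and $\mathbb{E}[f(I)]\ge(1-3\varepsilon)\lambda\,\mathbb{E}|S|$; in particular $(I,S)$ is a $(1-3\varepsilon)$-greedy block with respect to $\mathcal{M}$ and $f$; (ii) $\mathbb{E}\bigl|\{e\in N\setminus\mathrm{span}(S): f_S(e)>(1-\varepsilon)\lambda\}\bigr|\le(1-\varepsilon)|N|$.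
   Context: $f$ is normalized if $f(\emptyset)=0$ and submodular if $f(A)+f(B)\ge f(A\cup B)+f(A\cap B)$; $f_S(e)=f(S\cup\{e\})-f(S)$ (so $f_S(e)=0$ if $e\in S$). For a matroid, $\mathrm{span}(S)=\{e:\mathrm{rank}(S\cup\{e\})=\mathrm{rank}(S)\}$. A $p$-matchoid is given by matroids $\mathcal{M}_j=(N_j,\mathcal{I}_j)$, $N_j\subseteq N$, each element in at most $p$ of the $N_j$, with $\mathcal{I}=\{S: S\cap N_j\in\mathcal{I}_j\ \forall j\}$; its span is $\mathrm{span}(S)=\bigcup_j\mathrm{span}_j(S\cap N_j)$, where $\mathrm{span}_j$ is the span in $\mathcal{M}_j$. For a set system $(N,\mathcal{I})$, a real-valued $f$ and $\alpha\in[0,1]$, an $\alpha$-greedy block is a random pair $(I,S)$ with $I\subseteq S\subseteq N$, $I\in\mathcal{I}$ always, and $\mathbb{E}[f(I)]\ge\alpha\,\mathbb{E}[|S|]\cdot\max\{0,\max_{e\in N}f(\{e\})\}$. *)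

From HB Require Import structures.
From mathcomp Require Import all_boot all_order all_algebra.
Set Implicit Arguments. Unset Strict Implicit. Unset Printing Implicit Defensive.
Import Order.TTheory GRing.Theory Num.Theory.
Local Open Scope ring_scope.

(* The ground set N is the whole finite type T. *)

Record matroid (T : finType) := Matroid {
  mground : {set T};
  mindep : {set T} -> bool;
  mindep0 : mindep set0;
  mindep_ground : forall A : {set T}, mindep A -> A \subset mground;
  mindep_sub : forall A B : {set T}, A \subset B -> mindep B -> mindep A;
  mindep_exch : forall A B : {set T}, mindep A -> mindep B -> (#|A| < #|B|)%N ->
      exists2 x, x \in B :\: A & mindep (x |: A)
}.

Definition mrank (T : finType) (M : matroid T) (S : {set T}) : nat :=
  \max_(A : {set T} | (A \subset S) && mindep M A) #|A|.

Definition mspan (T : finType) (M : matroid T) (S : {set T}) : {set T} :=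
  [set e in mground M | mrank M (e |: S) == mrank M S].

Definition is_matchoid (T J : finType) (p : nat) (M : J -> matroid T) : Prop :=
  forall e : T, (#|[set j | e \in mground (M j)]| <= p)%N.

Definition matchoid_indep (T J : finType) (M : J -> matroid T) (S : {set T}) : bool :=
  [forall j, mindep (M j) (S :&: mground (M j))].

Definition matchoid_span (T J : finType) (M : J -> matroid T) (S : {set T}) : {set T} :=
  \bigcup_(j : J) mspan (M j) (S :&: mground (M j)).

Definition normalized (T : finType) (R : numDomainType) (f : {set T} -> R) : Prop :=
  f set0 = 0.

Definition submodular (T : finType) (R : numDomainType) (f : {set T} -> R) : Prop :=
  forall A B : {set T}, f (A :|: B) + f (A :&: B) <= f A + f B.

Definition marg (T : finType) (R : numDomainType) (f : {set T} -> R)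
  (S : {set T}) (e : T) : R := f (e |: S) - f S.

(** S_delta: each element of T independently with probability delta.
    Probability of a given realisation S, and expectation. *)
Definition prob_delta (T : finType) (R : numDomainType) (delta : R) (S : {set T}) : R :=
  delta ^+ #|S| * (1 - delta) ^+ (#|T| - #|S|).

Definition Exp_delta (T : finType) (R : numDomainType) (delta : R)
  (g : {set T} -> R) : R :=
  \sum_(S : {set T}) prob_delta delta S * g S.

(** alpha-greedy block for a random pair (I(S), S) with S drawn according to
    the weights [w]; independence (and I ⊆ S) required for every outcome. *)
Definition greedy_block (T : finType) (R : realDomainType)
  (indep : {set T} -> bool) (f : {set T} -> R) (alpha : R)
  (w : {set T} -> R) (I : {set T} -> {set T}) : Prop :=
  (forall S, (I S \subset S) && indep (I S)) /\
  alpha * (\sum_(S : {set T}) w S * (#|S|%:R)) *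
     Num.max 0 (\big[Num.max/0]_(e : T) f [set e])
  <= \sum_(S : {set T}) w S * f (I S).

Definition cond1 (T : finType) (R : realDomainType) (f : {set T} -> R)
  (eps lam delta : R) : Prop :=
  Exp_delta delta (fun S => #|[set e | marg f S e <= (1 - eps) * lam]|%:R)
    <= eps * #|T|%:R.

Definition cond2 (T J : finType) (R : realDomainType) (M : J -> matroid T)
  (eps delta : R) : Prop :=
  Exp_delta delta (fun S => #|matchoid_span M S|%:R) <= eps * #|T|%:R.

Definition Iset (T J : finType) (R : realDomainType) (M : J -> matroid T)
  (f : {set T} -> R) (eps lam : R) (S : {set T}) : {set T} :=
  [set e in S | ((1 - eps) * lam <= marg f (S :\ e) e)
                && (e \notin matchoid_span M (S :\ e))].

(* (i) [I] is independent (its elements are coloops of [S] in every matroid of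
   the matchoid) and, by submodularity, [f I >= c |I|].  An element of [S]
   is lost either because its marginal on [S :\ e] is low or because it is
   spanned by [S :\ e]; a coupling of [S] with [S :\ e] shows that each kind
   of loss has expectation at most [delta] times the left-hand side of (C1),
   resp. (C2), hence at most [delta eps n].  So [E f(I) >= c (1 - 2 eps) E|S|
   >= (1 - 3 eps) lam E|S|].
   (ii) Expectations are polynomials in [delta], hence continuous; so for the
   largest admissible [delta < 1] one of (C1), (C2) is tight, and either
   bound leaves at most [(1 - eps) n] good elements; for [delta = 1] there
   are none. *)
From HB Require Import structures.
From mathcomp Require Import all_boot all_order all_algebra.
From mathcomp Require Import polyrcf ring lra.
Set Implicit Arguments. Unset Strict Implicit. Unset Printing Implicit Defensive.
Import Order.TTheory GRing.Theory Num.Theory.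
Local Open Scope ring_scope.

Section ProductMeasure.
Variables (R : numDomainType) (T : finType) (d : R).
Local Notation P := (prob_delta d).
Local Notation E := (Exp_delta d).

Lemma sum_mem_setU1 (e : T) (Q : pred {set T}) (F : {set T} -> R) :
  \sum_(S : {set T} | (e \in S) && Q S) F S =
  \sum_(S : {set T} | (e \notin S) && Q (e |: S)) F (e |: S).
Proof.
rewrite (reindex_onto (fun S => e |: S) (fun S => S :\ e)); last first.
  by move=> S /andP[eS _]; rewrite setD1K.
apply: eq_bigl => S; rewrite setU11 /=.
have [eS|eS] /= := boolP (e \in S); last by rewrite setU1K // eqxx andbT.
by case: eqP => [defS|]; rewrite ?andbF //; move: eS; rewrite -defS setD11.
Qed.

Lemma prob_delta_ge0 (S : {set T}) : 0 <= d <= 1 -> 0 <= P S.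
Proof.
by case/andP=> d0 d1; rewrite /prob_delta mulr_ge0 // exprn_ge0 // subr_ge0.
Qed.

Lemma prob_delta_setU1 (e : T) (S : {set T}) :
  e \notin S -> (1 - d) * P (e |: S) = d * P S.
Proof.
move=> eS; rewrite /prob_delta cardsU1 eS /= add1n.
have ltST : (#|S| < #|T|)%N by have := max_card (e |: S); rewrite cardsU1 eS.
by rewrite -(subnSK ltST) !exprS; ring.
Qed.

(* The weights form a probability distribution (binomial theorem). *)
Lemma prob_delta_sum : \sum_(S : {set T}) P S = 1.
Proof.
rewrite (partition_big (fun S : {set T} => inord #|S| : 'I_#|T|.+1) xpredT) //=.
transitivity (\sum_(k < #|T|.+1) ((1 - d) ^+ (#|T| - k) * d ^+ k) *+ 'C(#|T|, k)).
  apply: eq_bigr => k _.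
  rewrite (eq_bigr (fun _ => (1 - d) ^+ (#|T| - k) * d ^+ k)); last first.
    by move=> S /eqP <-; rewrite /prob_delta inordK ?ltnS ?max_card // mulrC.
  rewrite sumr_const -card_draws; congr (_ *+ _); apply: eq_card => S.
  rewrite !inE; apply/eqP/eqP => [defk|->]; last by rewrite inord_val.
  by rewrite -defk /= inordK // ltnS max_card.
by rewrite -exprDn subrK expr1n.
Qed.

(* Mass of the sets containing [e] whose trace [S :\ e] satisfies [Q]:
   each such [S] pairs with [S :\ e], and the pair has total weight
   [P S + P (S :\ e)], of which [S] carries the fraction [d]. *)
Lemma prob_delta_mem (e : T) (Q : pred {set T}) :
  \sum_(S : {set T} | (e \in S) && Q (S :\ e)) P S =
  d * \sum_(S : {set T} | (e \notin S) && Q S) (P (e |: S) + P S).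
Proof.
rewrite sum_mem_setU1 mulr_sumr; apply: eq_big => [S|S /andP[eS _]].
  by case: (boolP (e \in S)) => //= eS; rewrite setU1K.
by rewrite mulrDr -(prob_delta_setU1 eS); ring.
Qed.

Lemma Exp_delta_le (g h : {set T} -> R) :
  0 <= d <= 1 -> (forall S, g S <= h S) -> E g <= E h.
Proof.
by move=> d01 gh; apply: ler_sum => S _; exact (ler_wpM2l (prob_delta_ge0 S d01) (gh S)).
Qed.

Lemma Exp_delta_const (c : R) : E (fun _ : {set T} => c) = c.
Proof. by rewrite /Exp_delta -mulr_suml prob_delta_sum mul1r. Qed.

Lemma Exp_deltaB (g h : {set T} -> R) : E (fun S => g S - h S) = E g - E h.
Proof. by rewrite /Exp_delta -sumrB; apply: eq_bigr => S _; rewrite mulrBr. Qed.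

Lemma Exp_deltaZ (c : R) (g : {set T} -> R) : E (fun S => c * g S) = c * E g.
Proof. by rewrite /Exp_delta mulr_sumr; apply: eq_bigr => S _; rewrite mulrCA. Qed.

Lemma Exp_delta_card (A : {set T} -> {set T}) :
  E (fun S => #|A S|%:R) = \sum_(e : T) \sum_(S : {set T} | e \in A S) P S.
Proof.
transitivity (\sum_(S : {set T}) \sum_(e : T) (if e \in A S then P S else 0)).
  apply: eq_bigr => S _; rewrite -big_mkcond /= -[in RHS](mulr1 (P S)).
  by rewrite -mulr_sumr sumr_const.
by rewrite exchange_big; apply: eq_bigr => e _; rewrite -big_mkcond.
Qed.

Lemma prob_delta_in (e : T) : \sum_(S : {set T} | e \in S) P S = d.
Proof.
have := prob_delta_mem e xpredT; rewrite (eq_bigl _ _ (fun S => andbT _)) => ->.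
rewrite big_split /= -(sum_mem_setU1 e xpredT) -[RHS]mulr1 -prob_delta_sum.
rewrite [in RHS](bigID (fun S : {set T} => e \in S)) /=.
by congr (_ * (_ + _)); apply: eq_bigl => S; rewrite andbT.
Qed.

Lemma Exp_delta_cardS : E (fun S : {set T} => #|S|%:R) = d * #|T|%:R.
Proof.
rewrite (Exp_delta_card id) (eq_bigr (fun _ => d)) => [|e _]; last exact: prob_delta_in.
by rewrite sumr_const mulr_natr.
Qed.

Lemma Exp_delta_removal_le (Q Q' : {set T} -> T -> bool) :
  0 <= d <= 1 ->
  (forall (S : {set T}) e, e \in S -> Q (S :\ e) e -> Q' S e) ->
  (forall (S : {set T}) e, e \notin S -> Q S e -> Q' S e) ->
  E (fun S : {set T} => #|[set e in S | Q (S :\ e) e]|%:R)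
    <= d * E (fun S => #|[set e | Q' S e]|%:R).
Proof.
move=> d01 QQ'in QQ'out; rewrite !Exp_delta_card mulr_sumr.
apply: ler_sum => e _.
rewrite (eq_bigl (fun S : {set T} => (e \in S) && Q (S :\ e) e)) => [|S]; last first.
  by rewrite inE.
rewrite (prob_delta_mem e (Q^~ e)); apply: ler_wpM2l; first by case/andP: d01.
rewrite big_split /=.
have -> : \sum_(S : {set T} | (e \notin S) && Q S e) P (e |: S) =
          \sum_(S : {set T} | (e \in S) && Q (S :\ e) e) P S.
  rewrite sum_mem_setU1; apply: eq_bigl => S.
  by case: (boolP (e \in S)) => //= eS; rewrite setU1K.
rewrite [X in X + _ <= _]big_mkcond [X in _ + X <= _]big_mkcond.
rewrite [X in _ <= X]big_mkcond -big_split; apply: ler_sum => S _ /=.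
rewrite inE; have PS0 := prob_delta_ge0 S d01.
have [eS|eS] /= := boolP (e \in S).
  rewrite addr0; case Qe: (Q (S :\ e) e); last by case: (Q' S e).
  by rewrite (QQ'in S e).
rewrite add0r; case Qe: (Q S e); last by case: (Q' S e).
by rewrite (QQ'out S e).
Qed.

End ProductMeasure.

Definition Exp_poly (R : numDomainType) (T : finType) (g : {set T} -> R) : {poly R} :=
  \sum_(S : {set T}) ('X ^+ #|S| * (1 - 'X) ^+ (#|T| - #|S|)) * (g S)%:P.

Lemma Exp_polyE (R : numDomainType) (T : finType) (g : {set T} -> R) (d : R) :
  (Exp_poly g).[d] = Exp_delta d g.
Proof.
by rewrite /Exp_poly horner_sum; apply: eq_bigr => S _; rewrite /prob_delta !hornerE.
Qed.

Lemma Exp_delta_lt_near (R : rcfType) (T : finType) (g : {set T} -> R) (x K : R) :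
  Exp_delta x g < K ->
  exists2 eta, 0 < eta & forall y, `|y - x| < eta -> Exp_delta y g < K.
Proof.
move=> ltK; have gap0 : 0 < K - Exp_delta x g by rewrite subr_gt0.
have [eta eta0 near_x] := poly_cont x (Exp_poly g) gap0.
exists eta => // y /near_x; rewrite !Exp_polyE => near_y.
by have := ler_norm (Exp_delta y g - Exp_delta x g); lra.
Qed.

Lemma Exp_delta_lt_right (R : rcfType) (T : finType) (g h : {set T} -> R)
    (x K L : R) :
  x < 1 -> Exp_delta x g < K -> Exp_delta x h < L ->
  exists2 y, x < y <= 1 & (Exp_delta y g < K) && (Exp_delta y h < L).
Proof.
move=> x1 /Exp_delta_lt_near[eta1 eta10 near1] /Exp_delta_lt_near[eta2 eta20 near2].
pose m := Num.min (Num.min eta1 eta2) (1 - x).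
have m0 : 0 < m by rewrite !lt_min eta10 eta20 subr_gt0 x1.
have [m1 m2 m3] : [/\ m <= eta1, m <= eta2 & m <= 1 - x].
  by rewrite /m !ge_min !lexx !orbT.
have dist : `|x + m / 2 - x| = m / 2.
  by rewrite addrAC subrr add0r ger0_norm // divr_ge0 // ltW.
exists (x + m / 2); first by apply/andP; split; lra.
by rewrite near1 ?near2 // dist; lra.
Qed.

Section Submodular.
Variables (R : realDomainType) (T : finType) (f : {set T} -> R).
Hypothesis f_submod : submodular f.

Lemma marg_antitone (A B : {set T}) (e : T) :
  A \subset B -> e \notin B -> marg f B e <= marg f A e.
Proof.
move=> AB eB; have := f_submod (e |: A) B.
have -> : (e |: A) :|: B = e |: B by rewrite -setUA (setUidPr AB).
have -> : (e |: A) :&: B = A.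
  by rewrite setIUl (setIidPl AB) (disjoint_setI0 _) ?set0U // disjoints1.
by rewrite /marg; lra.
Qed.

Hypothesis f_norm : normalized f.

(* If every element of [I \subset S] contributes at least [c] on top of the
   rest of [S], then [f I >= c |I|]: telescoping along [I] and diminishing
   returns, since [I :\ e \subset S :\ e]. *)
Lemma marg_sum_lower_bound (c : R) (S I : {set T}) :
  I \subset S -> (forall e, e \in I -> c <= marg f (S :\ e) e) ->
  c * #|I|%:R <= f I.
Proof.
have [n] := ubnP #|I|; elim: n I => // n IH I ltIn IS cI.
have [->|[e eI]] := set_0Vmem I; first by rewrite cards0 mulr0 f_norm.
have IeS : I :\ e \subset S by rewrite (subset_trans (subsetDl _ _) IS).
have rest : c * #|I :\ e|%:R <= f (I :\ e).
  apply: IH IeS _ => [|x /setD1P[_ xI]]; last exact: cI.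
  by move: ltIn; rewrite (cardsD1 e I) eI.
have step : marg f (S :\ e) e <= marg f (I :\ e) e.
  by apply: marg_antitone; [exact: setSD | rewrite setD11].
have card_I : #|I| = (#|I :\ e|).+1 by rewrite (cardsD1 e I) eI.
move: step (cI e eI); rewrite /marg (setD1K eI) card_I -addn1 natrD mulrDr mulr1.
lra.
Qed.

End Submodular.

Section MatroidRank.
Variables (T : finType) (M : matroid T).

Lemma mrank_witness (S : {set T}) :
  exists2 B : {set T}, (B \subset S) && mindep M B & #|B| = mrank M S.
Proof.
have gt0 : (0 < #|[pred B : {set T} | (B \subset S) && mindep M B]|)%N.
  by apply/card_gt0P; exists set0; rewrite inE sub0set mindep0.
have [B HB HBm] := eq_bigmax_cond (fun B : {set T} => #|B|) gt0.
by exists B; [exact: HB | rewrite /mrank HBm].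
Qed.

Lemma indep_le_mrank (S B : {set T}) :
  B \subset S -> mindep M B -> (#|B| <= mrank M S)%N.
Proof.
by move=> BS iB; apply: (leq_bigmax_cond (F := fun B : {set T} => #|B|)); rewrite BS iB.
Qed.

Lemma mrank_mono (A B : {set T}) : A \subset B -> (mrank M A <= mrank M B)%N.
Proof.
move=> AB; have [W /andP[WA iW] <-] := mrank_witness A.
exact: indep_le_mrank (subset_trans WA AB) iW.
Qed.

(* Elements of [X] outside the span of the rest of [X] (coloops of [X]) belong
   to every maximum independent subset of [X]; so any set of them is
   independent. *)
Lemma coloops_indep (X K : {set T}) :
  X \subset mground M -> K \subset X ->
  (forall e, e \in K -> e \notin mspan M (X :\ e)) -> mindep M K.
Proof.
move=> Xg KX Kcoloop; have [B /andP[BX iB] rkB] := mrank_witness X.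
apply: (mindep_sub _ iB); apply/subsetP => e eK; apply/negPn/negP => eB.
have eX := subsetP KX e eK.
have BXe : B \subset X :\ e.
  apply/subsetP => x xB; rewrite !inE (subsetP BX x xB) andbT.
  by apply: contraNneq eB => <-.
have := Kcoloop e eK; rewrite inE (subsetP Xg e eX) /= setD1K //.
by rewrite eqn_leq (mrank_mono (subsetDl X [set e])) -rkB indep_le_mrank.
Qed.

End MatroidRank.

(* In a matchoid, a subset [K] of [S] none of whose elements is spanned by
   the rest of [S] is independent: in each matroid [M j], [K] consists of
   coloops of [S :&: N_j]. *)
Lemma matchoid_indep_coloops (T J : finType) (M : J -> matroid T) (S K : {set T}) :
  K \subset S -> (forall e, e \in K -> e \notin matchoid_span M (S :\ e)) ->
  matchoid_indep M K.
Proof.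
move=> KS Kout; apply/forallP => j.
apply: (@coloops_indep _ (M j) (S :&: mground (M j))); first exact: subsetIr.
  exact: setSI.
move=> e /setIP[eK eg]; apply: contra (Kout e eK) => e_span.
by apply/bigcupP; exists j => //; rewrite setIDAC.
Qed.

Lemma greedy_block_of_bound (R : realDomainType) (T : finType)
    (indep : {set T} -> bool) (f : {set T} -> R) (alpha lam : R)
    (w : {set T} -> R) (I : {set T} -> {set T}) :
  (forall S, (I S \subset S) && indep (I S)) ->
  0 <= alpha -> 0 <= lam -> (forall e, f [set e] <= lam) ->
  0 <= \sum_(S : {set T}) w S * #|S|%:R ->
  alpha * lam * (\sum_(S : {set T}) w S * #|S|%:R) <= \sum_(S : {set T}) w S * f (I S) ->
  greedy_block indep f alpha w I.
Proof.
move=> Iblock alpha0 lam0 f_lam size0 bound; split=> //; apply: le_trans bound.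
have max_le : Num.max 0 (\big[Num.max/0]_(e : T) f [set e]) <= lam.
  rewrite ge_max lam0 /=; elim/big_ind: _ => // x y x_lam y_lam.
  by rewrite ge_max x_lam y_lam.
by rewrite [alpha * lam * _]mulrAC; exact: (ler_wpM2l (mulr_ge0 alpha0 size0) max_le).
Qed.

Section Construction.
Variables (R : realFieldType) (T J : finType) (M : J -> matroid T).
Variables (f : {set T} -> R) (eps lam : R).
Local Notation c := ((1 - eps) * lam).
Local Notation I := (Iset M f eps lam).

Definition low_marg (S : {set T}) : {set T} := [set e in S | marg f (S :\ e) e < c].
Definition spanned (S : {set T}) : {set T} :=
  [set e in S | e \in matchoid_span M (S :\ e)].

Lemma Iset_block (S : {set T}) : (I S \subset S) && matchoid_indep M (I S).
Proof.
have IS : I S \subset S by apply/subsetP => x /setIdP[].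
rewrite IS; apply: matchoid_indep_coloops IS _ => e.
by rewrite inE => /andP[_ /andP[]].
Qed.

Lemma card_Iset_ge (S : {set T}) :
  (#|S| <= #|I S| + #|low_marg S| + #|spanned S|)%N.
Proof.
have cover : S \subset (I S :|: low_marg S) :|: spanned S.
  apply/subsetP => e eS; rewrite !inE eS /=.
  by case: (lerP c (marg f (S :\ e) e)); case: (e \in matchoid_span M (S :\ e)).
apply: leq_trans (subset_leq_card cover) _.
apply: leq_trans (leq_card_setU _ _).1 _; rewrite leq_add2r.
exact: (leq_card_setU _ _).1.
Qed.

Hypotheses (f_norm : normalized f) (f_submod : submodular f).

Lemma f_Iset_ge (S : {set T}) : c * #|I S|%:R <= f (I S).
Proof.
apply: (marg_sum_lower_bound f_submod f_norm (S := S)).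
  by case/andP: (Iset_block S).
by move=> e; rewrite inE => /andP[_ /andP[]].
Qed.

Section AtDelta.
Variable d : R.
Hypothesis d01 : 0 <= d <= 1.

(* An element of [S] with low marginal on [S :\ e] also has low marginal on
   [S] itself (zero); so condition (C1) controls [low_marg]. *)
Lemma Exp_low_marg_le : 0 <= c ->
  Exp_delta d (fun S => #|low_marg S|%:R)
    <= d * Exp_delta d (fun S => #|[set e | marg f S e <= c]|%:R).
Proof.
move=> c0; apply: (Exp_delta_removal_le (Q := fun S e => marg f S e < c)) => // S e.
  by move=> eS _; rewrite /marg (setUidPr _) ?sub1set // subrr.
by move=> _ /ltW.
Qed.

(* Spans are monotone, so condition (C2) controls [spanned]. *)
Lemma Exp_spanned_le :
  Exp_delta d (fun S => #|spanned S|%:R)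
    <= d * Exp_delta d (fun S => #|matchoid_span M S|%:R).
Proof.
have -> : Exp_delta d (fun S => #|matchoid_span M S|%:R) =
          Exp_delta d (fun S => #|[set e | e \in matchoid_span M S]|%:R).
  by apply: eq_bigr => S _; congr (_ * _%:R); apply: eq_card => x; rewrite inE.
apply: (Exp_delta_removal_le (Q := fun S e => e \in matchoid_span M S)) => // S e eS.
case/bigcupP=> j _; rewrite !inE => /andP[eg _]; apply/bigcupP; exists j => //.
by rewrite inE eg /= (setUidPr _) // sub1set inE eS eg.
Qed.

(* Part (i): by (C1) and (C2), at most [2 eps d n] elements of [S] are lost
   in expectation, and each kept one is worth [c]. *)
Lemma Exp_f_Iset_ge :
  0 <= eps <= 1 -> 0 <= lam -> cond1 f eps lam d -> cond2 M eps d ->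
  (1 - 3 * eps) * lam * Exp_delta d (fun S : {set T} => #|S|%:R)
    <= Exp_delta d (fun S => f (I S)).
Proof.
case/andP=> eps0 eps1 lam0 C1 C2; have c0 : 0 <= c by rewrite mulr_ge0 ?subr_ge0.
have [d0 _] := andP d01.
have lost1 := le_trans (Exp_low_marg_le c0) (ler_wpM2l d0 C1).
have lost2 := le_trans Exp_spanned_le (ler_wpM2l d0 C2).
have kept : Exp_delta d (fun S => #|S|%:R - #|low_marg S|%:R - #|spanned S|%:R)
              <= Exp_delta d (fun S => #|I S|%:R).
  apply: Exp_delta_le => // S; rewrite lerBlDr lerBlDr -!natrD ler_nat addnAC.
  exact: card_Iset_ge.
rewrite !Exp_deltaB Exp_delta_cardS in kept.
apply: le_trans (Exp_delta_le d01 f_Iset_ge); rewrite Exp_deltaZ Exp_delta_cardS.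
apply: le_trans (ler_wpM2l c0 kept); rewrite -subr_ge0.
set n : R := #|T|%:R; set L := Exp_delta d _; set N := Exp_delta d _.
have -> : c * (d * n - L - N) - (1 - 3 * eps) * lam * (d * n) =
    lam * (1 - eps) * ((d * (eps * n) - L) + (d * (eps * n) - N))
    + 2 * (eps * eps) * (lam * (d * n)) by ring.
have lost : 0 <= (d * (eps * n) - L) + (d * (eps * n) - N).
  by rewrite addr_ge0 // subr_ge0.
by rewrite addr_ge0 // !mulr_ge0 // subr_ge0.
Qed.

End AtDelta.
End Construction.

Section Maximality.
Variables (R : rcfType) (T J : finType) (M : J -> matroid T).
Variables (f : {set T} -> R) (eps lam delta : R).
Local Notation c := ((1 - eps) * lam).

Definition good (S : {set T}) : {set T} :=
  [set e | (e \notin matchoid_span M S) && (c < marg f S e)].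

Lemma card_le_compl (A B : {set T}) :
  A \subset ~: B -> (#|A|%:R : R) <= #|T|%:R - #|B|%:R.
Proof.
by move/subset_leq_card; rewrite lerBrDr -natrD ler_nat -(cardsC B) addnC leq_add2l.
Qed.

(* Each of the three obstructions (low marginal, being spanned, being in
   [S], where the marginal is zero) excludes elements from [good S]. *)
Lemma card_good_le (S : {set T}) : 0 <= c ->
  [/\ (#|good S|%:R : R) <= #|T|%:R - #|[set e | marg f S e <= c]|%:R,
      (#|good S|%:R : R) <= #|T|%:R - #|matchoid_span M S|%:R
    & (#|good S|%:R : R) <= #|T|%:R - #|S|%:R].
Proof.
move=> c0; split; apply: card_le_compl; apply/subsetP => e; rewrite !inE.
- by case/andP=> _; rewrite ltNge.
- by case/andP.
case/andP=> _; apply: contraTN => eS.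
by rewrite /marg (setUidPr _) ?sub1set // subrr -leNgt.
Qed.

Hypothesis d01 : 0 <= delta <= 1.
Hypothesis delta_max : forall d : R,
  0 <= d <= 1 -> cond1 f eps lam d -> cond2 M eps d -> d <= delta.

(* Below 1, the largest admissible [delta] makes (C1) or (C2) tight: were
   both strict, they would stay so slightly to the right of [delta]. *)
Lemma maximal_delta_tight : delta < 1 ->
  eps * #|T|%:R <= Exp_delta delta (fun S => #|[set e | marg f S e <= c]|%:R) \/
  eps * #|T|%:R <= Exp_delta delta (fun S => #|matchoid_span M S|%:R).
Proof.
move=> delta1.
case: (lerP (eps * #|T|%:R) (Exp_delta delta _)) => [|C1]; first by left.
case: (lerP (eps * #|T|%:R) (Exp_delta delta _)) => [|C2]; first by right.
have [y /andP[lty y1] /andP[C1y C2y]] := Exp_delta_lt_right delta1 C1 C2.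
have y01 : 0 <= y <= 1 by rewrite y1 andbT (le_trans _ (ltW lty)) //; case/andP: d01.
by have := delta_max y01 (ltW C1y) (ltW C2y); rewrite leNgt lty.
Qed.

Lemma Exp_good_le : eps <= 1 -> 0 <= c ->
  Exp_delta delta (fun S => #|good S|%:R) <= (1 - eps) * #|T|%:R.
Proof.
move=> eps1 c0; set n : R := #|T|%:R.
have [G1 G2 G3] : [/\ forall S, (#|good S|%:R : R) <= n - #|[set e | marg f S e <= c]|%:R,
    forall S, (#|good S|%:R : R) <= n - #|matchoid_span M S|%:R
  & forall S, (#|good S|%:R : R) <= n - #|S|%:R].
  by split=> S; have [] := card_good_le S c0.
have [delta1|] := ltrP delta 1; last first.
  move=> delta_ge1; have -> : delta = 1.
    by apply/le_anti; rewrite delta_ge1 andbT; case/andP: d01.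
  apply: le_trans (Exp_delta_le _ G3) _; first by rewrite ler01 lexx.
  by rewrite Exp_deltaB Exp_delta_const Exp_delta_cardS mul1r subrr mulr_ge0 ?subr_ge0.
case: (maximal_delta_tight delta1) => [tight|tight].
  by apply: le_trans (Exp_delta_le d01 G1) _; rewrite Exp_deltaB Exp_delta_const; lra.
by apply: le_trans (Exp_delta_le d01 G2) _; rewrite Exp_deltaB Exp_delta_const; lra.
Qed.

End Maximality.

Unset Implicit Arguments.

Theorem mainTheorem5 (R : rcfType) (T J : finType) (p : nat)
  (M : J -> matroid T) (f : {set T} -> R) (eps lam delta : R) :
  is_matchoid p M ->
  normalized f -> submodular f ->
  0 < eps -> eps < 3^-1 ->
  0 <= lam ->
  (forall e : T, (1 - eps) * lam <= f [set e] /\ f [set e] <= lam) ->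
  0 <= delta <= 1 ->
  cond1 f eps lam delta -> cond2 M eps delta ->
  (forall d : R, 0 <= d <= 1 -> cond1 f eps lam d -> cond2 M eps d -> d <= delta) ->
  [/\ (forall S : {set T},
         (Iset M f eps lam S \subset S) && matchoid_indep M (Iset M f eps lam S)),
      (1 - 3 * eps) * lam * Exp_delta delta (fun S : {set T} => #|S|%:R)
        <= Exp_delta delta (fun S : {set T} => f (Iset M f eps lam S)),
      greedy_block (matchoid_indep M) f (1 - 3 * eps) (prob_delta delta)
        (Iset M f eps lam)
    & Exp_delta delta (fun S : {set T} =>
        #|[set e | (e \notin matchoid_span M S) && ((1 - eps) * lam < marg f S e)]|%:R)
      <= (1 - eps) * #|T|%:R].
Proof.
move=> _ f_norm f_submod eps_gt0 eps_lt lam0 f_single d01 C1 C2 delta_max.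
have eps01 : 0 <= eps <= 1 by apply/andP; split; lra.
have c0 : 0 <= (1 - eps) * lam by rewrite mulr_ge0 // subr_ge0; lra.
have block := Iset_block M f eps lam.
have value := Exp_f_Iset_ge f_norm f_submod d01 eps01 lam0 C1 C2.
split=> //; last by apply: Exp_good_le => //; lra.
apply: (greedy_block_of_bound (lam := lam)) => //; first by rewrite subr_ge0; lra.
  by move=> e; case: (f_single e).
by rewrite -/(Exp_delta _ _) Exp_delta_cardS mulr_ge0 //; case/andP: d01.
Qed.
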